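(* Consider the asynchronous network Newton method described in the context with stepsize $\varepsilon>0$, and let $t\ge2$. Then for every realization and every $y\in\mathbb{R}^n$, $$\big\|D(t-1)^{1/2}y\big\|\le\Big(1+C_1\|g(t-2)\|^{1/2}\Big)\big\|D(t-2)^{1/2}y\big\|,\qquad C_1=\left(\frac{\varepsilon\alpha L\Lambda}{2(1-\Delta)+\alpha m}\right)^{1/2}.$$
   Context: Setup. Let $n\ge 1$ be the number of agents and $\alpha>0$ a scalar. $W\in\mathbb{R}^{n\times n}$ is a symmetric nonnegative matrix with $W\mathbb{1}=\mathbb{1}$ (where $\mathbb{1}$ is the all-ones vector), $\mathrm{null}(I-W)=\mathrm{span}\{\mathbb{1}\}$, $0\le W_{ij}<1$ for all $i,j$, and $\delta\le W_{ii}\le\Delta$ for all $i$, for constants $0<\delta\le\Delta<1$. Each $f_i:\mathbb{R}\to\mathbb{R}$ is twice continuously differentiable with $0<m\le f_i''(s)\le M<\infty$ for all $s$ and $|f_i''(a)-f_i''(b)|\le L|a-b|$ for all $a,b$. Define $F(x)=\frac12 x^T(I-W)x+\alpha\sum_{i=1}^n f_i(x_i)$ for $x\in\mathbb{R}^n$, with minimum value $F^*$ and minimizer $x^*$. Let $g(x)=\nabla F(x)$, $G(x)=\mathrm{diag}(f_1''(x_1),\dots,f_n''(x_n))$, $H(x)=\nabla^2F(x)=I-W+\alpha G(x)$. Let $W_d$ be the diagonal matrix with $[W_d]_{ii}=W_{ii}$, and set $D(x)=\alpha G(x)+2(I-W_d)$ (diagonal, positive definite) and $B=I-2W_d+W$,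 so $H(x)=D(x)-B$. Define the approximate Hessian inverse $\hat H(x)^{-1}=D(x)^{-1/2}\big(I+D(x)^{-1/2}BD(x)^{-1/2}\big)D(x)^{-1/2}$. Constants: $\rho=\frac{2(1-\delta)}{2(1-\delta)+\alpha m}$, $\Lambda=\frac{1+\rho}{2(1-\Delta)+\alpha m}$, $\lambda=\frac{1}{2(1-\delta)+\alpha M}$. Algorithm (asynchronous network Newton). Given $x(0)\in\mathbb{R}^n$ and stepsize $\varepsilon>0$, let $\Phi(1),\Phi(2),\dots$ be i.i.d. random diagonal $n\times n$ matrices, each equal to $e_ie_i^T$ (the matrix with a single $1$ in position $(i,i)$ and zeros elsewhere) with probability $1/n$ for each $i=1,\dots,n$ (i.e., one uniformly random agent is active per iteration). The iterates are $x(t)=x(t-1)-\varepsilon\,\Phi(t)\hat H(x(t-1))^{-1}g(x(t-1))$, $t\ge1$. Write $g(t)=g(x(t))$, $D(t)=D(x(t))$, $H(t)=H(x(t))$, $\hat H(t)^{-1}=\hat H(x(t))^{-1}$. $\mathcal{F}_t$ denotes the $\sigma$-field generated by $\Phi(1),\dots,\Phi(t)$ (so $x(t)$ is $\mathcal{F}_t$-measurable). *)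

From Stdlib Require Import Reals Lra Lia.
Open Scope R_scope.

(* Vectors in R^n are functions nat -> R (only indices < n matter);
   n x n matrices are functions nat -> nat -> R. *)

Fixpoint rsum (n : nat) (f : nat -> R) : R :=
  match n with
  | O => 0
  | S k => rsum k f + f k
  end.

Definition kron (i j : nat) : R := if Nat.eqb i j then 1 else 0.

Definition vnorm (n : nat) (v : nat -> R) : R := sqrt (rsum n (fun i => v i ^ 2)).

Definition gradF (n : nat) (W : nat -> nat -> R) (alpha : R) (f1 : nat -> R -> R)
  (x : nat -> R) : nat -> R :=
  fun i => rsum n (fun j => (kron i j - W i j) * x j) + alpha * f1 i (x i).

Definition Ddiag (W : nat -> nat -> R) (alpha : R) (f2 : nat -> R -> R)
  (x : nat -> R) (i : nat) : R :=
  alpha * f2 i (x i) + 2 * (1 - W i i).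

Definition Bmat (W : nat -> nat -> R) (i j : nat) : R :=
  kron i j - 2 * kron i j * W i i + W i j.

(* hat H(x)^{-1} = D^{-1/2} (I + D^{-1/2} B D^{-1/2}) D^{-1/2}, entrywise *)
Definition Hinv (W : nat -> nat -> R) (alpha : R) (f2 : nat -> R -> R)
  (x : nat -> R) (i j : nat) : R :=
  / sqrt (Ddiag W alpha f2 x i) *
  (kron i j + / sqrt (Ddiag W alpha f2 x i) * Bmat W i j * / sqrt (Ddiag W alpha f2 x j)) *
  / sqrt (Ddiag W alpha f2 x j).

(* Iterates of the asynchronous network Newton method along a realization
   idx : nat -> nat, where Phi(t) = e_{idx t} e_{idx t}^T. *)
Fixpoint xiter (n : nat) (W : nat -> nat -> R) (alpha eps : R)
  (f1 f2 : nat -> R -> R) (x0 : nat -> R) (idx : nat -> nat) (t : nat) : nat -> R :=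
  match t with
  | O => x0
  | S s =>
      let xp := xiter n W alpha eps f1 f2 x0 idx s in
      fun k => xp k - eps * kron k (idx (S s)) *
               rsum n (fun j => Hinv W alpha f2 xp k j * gradF n W alpha f1 xp j)
  end.

From Stdlib Require Import Reals Lra Lia.
Open Scope R_scope.

(* Only the active agent k = idx t moves, and it moves by eps times the k-th entry of
   hat H^{-1} g.  Every row of hat H^{-1} has absolute sum at most Lambda, so x_k changes by
   at most eps Lambda ||g||.  By the Lipschitz bound on f_k'' the entry D_kk then grows by at
   most alpha L eps Lambda ||g||, which is at most C1^2 ||g|| D_kk because
   D_kk >= 2 (1 - Delta) + alpha m; all other entries of D are unchanged.  Finally
   sqrt (d (1 + c)) <= (1 + sqrt c) sqrt d. *)

Lemma rsum_le n f g : (forall i, (i < n)%nat -> f i <= g i) -> rsum n f <= rsum n g.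
Proof.
  induction n as [|n IH]; simpl; intros Hfg; [lra|].
  apply Rplus_le_compat; [apply IH; intros|]; apply Hfg; lia.
Qed.

Lemma rsum_ext n f g : (forall i, (i < n)%nat -> f i = g i) -> rsum n f = rsum n g.
Proof.
  induction n as [|n IH]; simpl; intros Hfg; [reflexivity|].
  rewrite IH, Hfg; [reflexivity | lia | intros; apply Hfg; lia].
Qed.

Lemma Rabs_rsum_le n f : Rabs (rsum n f) <= rsum n (fun i => Rabs (f i)).
Proof.
  induction n as [|n IH]; simpl; [rewrite Rabs_R0; lra|].
  eapply Rle_trans; [apply Rabs_triang | lra].
Qed.

Lemma rsum_scal n c f : rsum n (fun i => c * f i) = c * rsum n f.
Proof. induction n as [|n IH]; simpl; [|rewrite IH]; ring. Qed.

Lemma rsum_plus n f g : rsum n (fun i => f i + g i) = rsum n f + rsum n g.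
Proof. induction n as [|n IH]; simpl; [|rewrite IH]; ring. Qed.

Lemma rsum_kron_out n k a : (n <= k)%nat -> rsum n (fun j => kron k j * a j) = 0.
Proof.
  induction n as [|n IH]; simpl; intros Hnk; [reflexivity|].
  rewrite IH by lia; unfold kron; destruct (Nat.eqb_spec k n); [lia | ring].
Qed.

Lemma rsum_kron n k a : (k < n)%nat -> rsum n (fun j => kron k j * a j) = a k.
Proof.
  induction n as [|n IH]; simpl; intros Hk; [lia|].
  unfold kron at 2; destruct (Nat.eqb_spec k n) as [->|Hkn].
  - rewrite rsum_kron_out by lia; ring.
  - rewrite IH by lia; ring.
Qed.

Lemma rsum_kron_split n k a b : (k < n)%nat ->
  rsum n (fun j => kron k j * a + (1 - kron k j) * b j) = a + rsum n b - b k.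
Proof.
  intros Hk.
  rewrite (rsum_ext n _ (fun j => kron k j * (a - b j) + b j)) by (intros; ring).
  rewrite rsum_plus, (rsum_kron n k (fun j => a - b j)) by exact Hk; ring.
Qed.

Lemma Rabs_le_vnorm n v k : (k < n)%nat -> Rabs (v k) <= vnorm n v.
Proof.
  intros Hk; rewrite <- sqrt_Rsqr_abs; apply sqrt_le_1_alt.
  replace (Rsqr (v k)) with (rsum n (fun j => kron k j * v j ^ 2))
    by (rewrite (rsum_kron n k (fun j => v j ^ 2)) by exact Hk; unfold Rsqr; ring).
  apply rsum_le; intros i _; unfold kron.
  destruct (Nat.eqb k i); nra.
Qed.

Lemma vnorm_le_scale n u v c : 0 <= c ->
  (forall i, (i < n)%nat -> Rabs (u i) <= c * Rabs (v i)) -> vnorm n u <= c * vnorm n v.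
Proof.
  intros Hc Huv; unfold vnorm.
  rewrite <- (sqrt_Rsqr c) at 1 by exact Hc.
  rewrite <- sqrt_mult_alt by apply Rle_0_sqr; apply sqrt_le_1_alt.
  rewrite <- rsum_scal; apply rsum_le; intros i Hi.
  specialize (Huv i Hi); pose proof (Rabs_pos (u i)); pose proof (Rabs_pos (v i)).
  rewrite <- (pow2_abs (u i)), <- (pow2_abs (v i)); unfold Rsqr; nra.
Qed.

Lemma sqrt_le_1_plus_sqrt d d' c : 0 <= d -> 0 <= c -> d' <= d + c * d ->
  sqrt d' <= (1 + sqrt c) * sqrt d.
Proof.
  intros Hd Hc Hd'.
  pose proof (sqrt_pos c); pose proof (sqrt_sqrt c Hc).
  rewrite <- (sqrt_square (1 + sqrt c)) by lra.
  rewrite <- sqrt_mult by nra; apply sqrt_le_1_alt; nra.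
Qed.

Lemma Hinv_diag W alpha f2 z k : 0 < Ddiag W alpha f2 z k ->
  Hinv W alpha f2 z k k
  = / Ddiag W alpha f2 z k + (1 - W k k) / (Ddiag W alpha f2 z k * Ddiag W alpha f2 z k).
Proof.
  intros Hd; unfold Hinv, Bmat, kron; rewrite Nat.eqb_refl.
  pose proof (sqrt_sqrt _ (Rlt_le _ _ Hd)) as Hs; pose proof (sqrt_lt_R0 _ Hd).
  set (s := sqrt _) in *; rewrite <- Hs; field; lra.
Qed.

Lemma Hinv_offdiag W alpha f2 z k j : k <> j ->
  0 < Ddiag W alpha f2 z k -> 0 < Ddiag W alpha f2 z j ->
  Hinv W alpha f2 z k j = W k j / (Ddiag W alpha f2 z k * Ddiag W alpha f2 z j).
Proof.
  intros Hkj Hdk Hdj; unfold Hinv, Bmat, kron; destruct (Nat.eqb_spec k j); [lia|].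
  pose proof (sqrt_sqrt _ (Rlt_le _ _ Hdk)) as Hsk; pose proof (sqrt_lt_R0 _ Hdk).
  pose proof (sqrt_sqrt _ (Rlt_le _ _ Hdj)) as Hsj; pose proof (sqrt_lt_R0 _ Hdj).
  set (sk := sqrt (Ddiag W alpha f2 z k)) in *; set (sj := sqrt (Ddiag W alpha f2 z j)) in *.
  rewrite <- Hsk, <- Hsj; field; lra.
Qed.

Lemma Hinv_row_weight_le delta am d0 dk u :
  0 < am -> 0 < d0 -> d0 <= dk -> 0 <= u <= 1 - delta -> 2 * u + am <= dk ->
  / dk + u / (dk * dk) + u / (dk * d0)
  <= (1 + 2 * (1 - delta) / (2 * (1 - delta) + am)) / d0.
Proof.
  intros Ham Hd0 Hdk Hu Hudk.
  set (w := (1 - delta) / (2 * (1 - delta) + am)).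
  (* [u / (2u + am)] increases with [u]. *)
  assert (Hratio : u / dk <= w).
  { apply Rle_trans with (u / (2 * u + am)).
    - apply Rmult_le_compat_l; [lra | apply Rinv_le_contravar; lra].
    - assert (Hdiff : u / (2 * u + am) - w
                      = am * (u - (1 - delta)) / ((2 * u + am) * (2 * (1 - delta) + am)))
        by (unfold w; field; lra).
      assert (am * (u - (1 - delta)) / ((2 * u + am) * (2 * (1 - delta) + am)) <= 0).
      { assert (0 < / ((2 * u + am) * (2 * (1 - delta) + am)))
          by (apply Rinv_0_lt_compat; nra).
        assert (am * (u - (1 - delta)) <= 0) by nra.
        unfold Rdiv; nra. }
      lra. }
  assert (Hinv_dk : / dk <= / d0) by (apply Rinv_le_contravar; lra).
  assert (0 < / dk) by (apply Rinv_0_lt_compat; lra).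
  assert (0 <= u / dk) by (apply Rle_mult_inv_pos; lra).
  replace (/ dk + u / (dk * dk) + u / (dk * d0)) with (/ dk + u / dk * / dk + u / dk * / d0)
    by (field; lra).
  replace ((1 + 2 * (1 - delta) / (2 * (1 - delta) + am)) / d0)
    with (/ d0 + w * / d0 + w * / d0) by (unfold w; field; lra).
  assert (u / dk * / dk <= w * / d0) by (apply Rmult_le_compat; lra).
  assert (u / dk * / d0 <= w * / d0)
    by (apply Rmult_le_compat_r; [left; apply Rinv_0_lt_compat|]; lra).
  lra.
Qed.

Section AsyncNetworkNewton.

Variables (n : nat) (W : nat -> nat -> R) (alpha delta Delta m L eps : R).
Variables (f1 f2 : nat -> R -> R) (x0 : nat -> R) (idx : nat -> nat).

Hypothesis Halpha : 0 < alpha.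
Hypothesis Hm : 0 < m.
Hypothesis Hdelta : delta <= Delta.
Hypothesis HDelta : Delta < 1.
Hypothesis HW_nonneg : forall i j, (i < n)%nat -> (j < n)%nat -> 0 <= W i j.
Hypothesis HW_rows : forall i, (i < n)%nat -> rsum n (fun j => W i j) = 1.
Hypothesis HW_diag : forall i, (i < n)%nat -> delta <= W i i <= Delta.
Hypothesis Hf2_lb : forall i s, (i < n)%nat -> m <= f2 i s.
Hypothesis Hf2_lip : forall i a b, (i < n)%nat -> Rabs (f2 i a - f2 i b) <= L * Rabs (a - b).
Hypothesis HL : 0 <= L.
Hypothesis Heps : 0 < eps.
Hypothesis Hidx : forall t, (idx t < n)%nat.

Local Notation D := (Ddiag W alpha f2).
Local Notation dmin := (2 * (1 - Delta) + alpha * m).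
Local Notation Lambda := ((1 + 2 * (1 - delta) / (2 * (1 - delta) + alpha * m)) / dmin).
Local Notation x := (xiter n W alpha eps f1 f2 x0 idx).

Lemma Ddiag_ge z i : (i < n)%nat -> 2 * (1 - W i i) + alpha * m <= D z i.
Proof. intros Hi; unfold Ddiag; pose proof (Hf2_lb i (z i) Hi); nra. Qed.

Lemma dmin_pos : 0 < dmin.
Proof. nra. Qed.

Lemma dmin_le_Ddiag z i : (i < n)%nat -> dmin <= D z i.
Proof. intros Hi; pose proof (Ddiag_ge z i Hi); pose proof (HW_diag i Hi); lra. Qed.

Lemma Lambda_pos : 0 < Lambda.
Proof.
  pose proof dmin_pos.
  apply Rdiv_lt_0_compat; [|lra].
  pose proof (Rdiv_lt_0_compat (2 * (1 - delta)) (2 * (1 - delta) + alpha * m)); nra.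
Qed.

Lemma Hinv_abs_le z k j : (k < n)%nat -> (j < n)%nat ->
  Rabs (Hinv W alpha f2 z k j)
  <= kron k j * (/ D z k + (1 - W k k) / (D z k * D z k))
     + (1 - kron k j) * (W k j / (D z k * dmin)).
Proof.
  intros Hk Hj.
  pose proof dmin_pos; pose proof (dmin_le_Ddiag z k Hk); pose proof (dmin_le_Ddiag z j Hj).
  pose proof (HW_diag k Hk); pose proof (HW_nonneg k j Hk Hj).
  unfold kron at 1 2; destruct (Nat.eqb_spec k j) as [<-|Hkj].
  - rewrite Hinv_diag by lra.
    assert (0 < / D z k) by (apply Rinv_0_lt_compat; lra).
    assert (0 <= (1 - W k k) / (D z k * D z k)) by (apply Rle_mult_inv_pos; nra).
    rewrite Rabs_right; lra.
  - rewrite Hinv_offdiag by (exact Hkj || lra).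
    rewrite Rabs_right by (apply Rle_ge, Rle_mult_inv_pos; nra).
    replace (0 * _ + (1 - 0) * _) with (W k j / (D z k * dmin)) by ring.
    apply Rmult_le_compat_l; [lra|]; apply Rinv_le_contravar; nra.
Qed.

Lemma rsum_Hinv_abs_le z k : (k < n)%nat ->
  rsum n (fun j => Rabs (Hinv W alpha f2 z k j)) <= Lambda.
Proof.
  intros Hk.
  pose proof dmin_pos; pose proof (dmin_le_Ddiag z k Hk).
  eapply Rle_trans; [apply rsum_le; intros j Hj; exact (Hinv_abs_le z k j Hk Hj)|].
  rewrite rsum_kron_split by exact Hk.
  rewrite (rsum_ext n _ (fun j => / (D z k * dmin) * W k j)) by (intros; unfold Rdiv; ring).
  rewrite rsum_scal, HW_rows by exact Hk.
  replace (/ D z k + (1 - W k k) / (D z k * D z k)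
           + / (D z k * dmin) * 1 - W k k / (D z k * dmin))
    with (/ D z k + (1 - W k k) / (D z k * D z k) + (1 - W k k) / (D z k * dmin))
    by (field; lra).
  pose proof (HW_diag k Hk).
  apply Hinv_row_weight_le; try nra; apply Ddiag_ge, Hk.
Qed.

Lemma Hinv_mul_abs_le z k v : (k < n)%nat ->
  Rabs (rsum n (fun j => Hinv W alpha f2 z k j * v j)) <= Lambda * vnorm n v.
Proof.
  intros Hk.
  eapply Rle_trans; [apply Rabs_rsum_le|].
  eapply Rle_trans.
  { apply (rsum_le n _ (fun j => vnorm n v * Rabs (Hinv W alpha f2 z k j))).
    intros j Hj; rewrite Rabs_mult, Rmult_comm.
    apply Rmult_le_compat_r; [apply Rabs_pos | apply Rabs_le_vnorm, Hj]. }
  rewrite rsum_scal, Rmult_comm.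
  apply Rmult_le_compat_r; [apply sqrt_pos | apply rsum_Hinv_abs_le, Hk].
Qed.

Lemma xiter_step_abs_le s i :
  Rabs (x (S s) i - x s i) <= eps * Lambda * vnorm n (gradF n W alpha f1 (x s)).
Proof.
  pose proof Lambda_pos.
  simpl; unfold kron; destruct (Nat.eqb_spec i (idx (S s))) as [->|_].
  - replace (_ - _) with (- (eps * rsum n (fun j => Hinv W alpha f2 (x s) (idx (S s)) j
                                              * gradF n W alpha f1 (x s) j))) by ring.
    rewrite Rabs_Ropp, Rabs_mult, Rabs_right, Rmult_assoc by lra.
    apply Rmult_le_compat_l; [lra | apply Hinv_mul_abs_le, Hidx].
  - replace (_ - _) with 0 by ring; rewrite Rabs_R0.
    apply Rmult_le_pos; [nra | apply sqrt_pos].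
Qed.

Lemma Ddiag_lipschitz z z' i : (i < n)%nat ->
  D z' i <= D z i + alpha * L * Rabs (z' i - z i).
Proof.
  intros Hi; unfold Ddiag.
  pose proof (Hf2_lip i (z' i) (z i) Hi); pose proof (Rle_abs (f2 i (z' i) - f2 i (z i))).
  nra.
Qed.

Lemma sqrt_Ddiag_step s i : (i < n)%nat ->
  sqrt (D (x (S s)) i)
  <= (1 + sqrt (eps * alpha * L * Lambda / dmin)
          * sqrt (vnorm n (gradF n W alpha f1 (x s)))) * sqrt (D (x s) i).
Proof.
  intros Hi.
  set (G := vnorm n (gradF n W alpha f1 (x s))).
  set (c := eps * alpha * L * Lambda / dmin).
  pose proof dmin_pos; pose proof Lambda_pos; pose proof (dmin_le_Ddiag (x s) i Hi).
  assert (HG : 0 <= G) by apply sqrt_pos.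
  assert (0 <= eps * alpha * L) by (apply Rmult_le_pos; [apply Rmult_le_pos|]; lra).
  assert (Hc : 0 <= c) by (apply Rle_mult_inv_pos; [apply Rmult_le_pos|]; lra).
  rewrite <- sqrt_mult by assumption.
  apply sqrt_le_1_plus_sqrt; [lra | nra|].
  assert (Hstep : alpha * L * Rabs (x (S s) i - x s i) <= c * G * dmin).
  { replace (c * G * dmin) with (alpha * L * (eps * Lambda * G)) by (unfold c; field; lra).
    apply Rmult_le_compat_l; [nra | apply xiter_step_abs_le]. }
  pose proof (Ddiag_lipschitz (x s) (x (S s)) i Hi).
  assert (0 <= c * G) by nra.
  nra.
Qed.

End AsyncNetworkNewton.

Theorem mainTheorem6
  (n : nat) (alpha : R) (W : nat -> nat -> R) (delta Delta : R)
  (f f1 f2 : nat -> R -> R) (m M L eps : R)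
  (x0 : nat -> R) (idx : nat -> nat) :
  (1 <= n)%nat ->
  0 < alpha ->
  (* assumptions on W *)
  (forall i j, (i < n)%nat -> (j < n)%nat -> W i j = W j i) ->
  (forall i j, (i < n)%nat -> (j < n)%nat -> 0 <= W i j < 1) ->
  (forall i, (i < n)%nat -> rsum n (fun j => W i j) = 1) ->
  (forall v : nat -> R,
      (forall i, (i < n)%nat -> rsum n (fun j => (kron i j - W i j) * v j) = 0)
      <-> exists c : R, forall i, (i < n)%nat -> v i = c) ->
  0 < delta -> delta <= Delta -> Delta < 1 ->
  (forall i, (i < n)%nat -> delta <= W i i <= Delta) ->
  (* assumptions on the f_i: C^2 with m <= f_i'' <= M, f_i'' L-Lipschitz *)
  (forall i s, (i < n)%nat -> derivable_pt_lim (f i) s (f1 i s)) ->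
  (forall i s, (i < n)%nat -> derivable_pt_lim (f1 i) s (f2 i s)) ->
  (forall i, (i < n)%nat -> continuity (f2 i)) ->
  0 < m -> m <= M ->
  (forall i s, (i < n)%nat -> m <= f2 i s <= M) ->
  (forall i a b, (i < n)%nat -> Rabs (f2 i a - f2 i b) <= L * Rabs (a - b)) ->
  (* algorithm *)
  0 < eps ->
  (forall t, (idx t < n)%nat) ->
  let rho := 2 * (1 - delta) / (2 * (1 - delta) + alpha * m) in
  let Lambda := (1 + rho) / (2 * (1 - Delta) + alpha * m) in
  let C1 := sqrt (eps * alpha * L * Lambda / (2 * (1 - Delta) + alpha * m)) in
  let x := xiter n W alpha eps f1 f2 x0 idx in
  forall (t : nat) (y : nat -> R), (2 <= t)%nat ->
    vnorm n (fun i => sqrt (Ddiag W alpha f2 (x (t - 1)%nat) i) * y i)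
    <= (1 + C1 * sqrt (vnorm n (gradF n W alpha f1 (x (t - 2)%nat))))
       * vnorm n (fun i => sqrt (Ddiag W alpha f2 (x (t - 2)%nat) i) * y i).
Proof.
  intros Hn Halpha _ HW HW_rows _ _ Hdelta HDelta HW_diag _ _ _ Hm _ Hf2 Hf2_lip Heps Hidx
         rho Lambda C1 x t y Ht.
  assert (HL : 0 <= L).
  { pose proof (Hf2_lip 0%nat 1 0 Hn); pose proof (Rabs_pos (f2 0%nat 1 - f2 0%nat 0)).
    rewrite Rminus_0_r, Rabs_R1 in *; lra. }
  destruct t as [|[|s]]; [lia | lia |].
  replace (S (S s) - 1)%nat with (S s) by lia; replace (S (S s) - 2)%nat with s by lia.
  apply vnorm_le_scale.
  { assert (0 <= C1) by apply sqrt_pos.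
    pose proof (sqrt_pos (vnorm n (gradF n W alpha f1 (x s)))); nra. }
  intros i Hi; rewrite !Rabs_mult, !(Rabs_pos_eq (sqrt _)) by apply sqrt_pos.
  rewrite <- Rmult_assoc; apply Rmult_le_compat_r; [apply Rabs_pos|].
  apply (sqrt_Ddiag_step n W alpha delta Delta m); try assumption.
  - intros i' j Hi' Hj; apply HW; assumption.
  - intros i' r Hi'; apply Hf2, Hi'.
Qed.
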